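(* Let $r\in\mathbb{N}$, $r\ge2$, and let $\underline{m}=(m_0,m_1,m_2,m_3)\in\mathbb{N}^4$ be such that for a single $\ell\in\{0,1,2,3\}$, $\gcd(m_\ell,r)=K$ and $\gcd(m_i,r)=1$ for $i\ne\ell$. Let $t\in\{0,\dots,K-1\}$. Then: (1) for $i<\ell$, there are $\frac{r}{K}$ 1-step admissible paths from $(v_i,0)$ to $(v_\ell,t)$; (2) for $i>\ell$, there are $\frac{r}{K}$ 1-step admissible paths from $(v_\ell,t)$ to $(v_i,0)$.
   Context: $\Lambda=L_7\times_c\mathbb{Z}_r$ is the directed graph with vertices $(v_i,k)$, $0\le i\le 3$, $k\in\mathbb{Z}_r$, and edges $(e_{ij},k)$, $0\le i\le j\le 3$, $k\in\mathbb{Z}_r$, with source $(v_i,k-m_i\bmod r)$ and range $(v_j,k)$; the vertices $(v_i,k)$, $k\in\mathbb{Z}_r$, form level $i$. A path is a finite sequence of edges each starting at the range of the previous. A path of length at least one from $(v_i,s)$ to $(v_j,t)$ is admissible if none of the vertices it passes through other than its source and range lies in $\{(v_p,k): \min(i,j)\le p\le \max(i,j),\ 0\le k\le\gcd(m_p,r)-1\}$. An admissible path is $k$-step if the set of levels containing its vertices (including source and range) has exactly $k+1$ elements; in particular a 1-step path only visits the level of its source and the level of its range. *)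

From mathcomp Require Import all_boot.
Set Implicit Arguments. Unset Strict Implicit. Unset Printing Implicit Defensive.

(* The graph Lambda = L_7 x_c Z_r, for parameters r and m = (m_0,..,m_3).
   A vertex (v_i, k) is the pair (i, k) with i : 'I_4 and k a natural < r.
   An edge (e_ij, k) is the triple (i, j, k) with i <= j and k < r. *)
Definition vertex := ('I_4 * nat)%type.
Definition edge := ('I_4 * 'I_4 * nat)%type.

Definition valid_edge (r : nat) (e : edge) : bool :=
  (e.1.1 <= e.1.2) && (e.2 < r).

(* source of (e_ij,k) is (v_i, (k - m_i) mod r) *)
Definition esrc (r : nat) (m : 'I_4 -> nat) (e : edge) : vertex :=
  (e.1.1, (e.2 + (r - m e.1.1 %% r)) %% r).

Definition ergn (e : edge) : vertex := (e.1.2, e.2).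

Fixpoint chained (r : nat) (m : 'I_4 -> nat) (e : edge) (p : seq edge) : bool :=
  match p with
  | [::] => true
  | f :: q => (esrc r m f == ergn e) && chained r m f q
  end.

Definition is_path (r : nat) (m : 'I_4 -> nat) (p : seq edge) : bool :=
  match p with
  | [::] => false
  | e :: q => all (valid_edge r) p && chained r m e q
  end.

Definition path_src (r : nat) (m : 'I_4 -> nat) (p : seq edge) (d : vertex) : vertex :=
  match p with [::] => d | e :: _ => esrc r m e end.

Definition path_rng (p : seq edge) (d : vertex) : vertex :=
  match p with [::] => d | e :: q => ergn (last e q) end.

Definition path_vertices (r : nat) (m : 'I_4 -> nat) (p : seq edge) : seq vertex :=
  match p with [::] => [::] | e :: _ => esrc r m e :: map ergn p end.

(* interior vertices: all visited vertices other than the source and range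
   positions, i.e. the ranges of all edges but the last one *)
Definition interior_vertices (p : seq edge) : seq vertex :=
  match p with [::] => [::] | e :: q => map ergn (belast e q) end.

Definition forbidden (r : nat) (m : 'I_4 -> nat) (i j : 'I_4) (v : vertex) : bool :=
  (minn i j <= v.1 <= maxn i j) && (v.2 < gcdn (m v.1) r).

Definition admissible (r : nat) (m : 'I_4 -> nat) (u w : vertex) (p : seq edge) : bool :=
  [&& is_path r m p,
      path_src r m p u == u,
      path_rng p w == w &
      all (fun v => ~~ forbidden r m u.1 w.1 v) (interior_vertices p)].

Definition levels (r : nat) (m : 'I_4 -> nat) (p : seq edge) : seq 'I_4 :=
  undup (map fst (path_vertices r m p)).

Definition kstep_admissible (r : nat) (m : 'I_4 -> nat) (k : nat) (u w : vertex)
  (p : seq edge) : bool :=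
  admissible r m u w p && (size (levels r m p) == k.+1).

From mathcomp Require Import all_boot zify.
Set Implicit Arguments. Unset Strict Implicit. Unset Printing Implicit Defensive.

(* A 1-step admissible path from level j1 to a higher level j2 can only use
   loops e_(j1 j1), one edge e_(j1 j2) and loops e_(j2 j2), so it consists of
   a loops at level j1 followed by the crossing edge and b loops at level j2.
   Along loops at level j the second coordinate moves by m_j in Z/rZ, hence
   stays in one residue class modulo g_j = gcd(m_j, r) and first returns to
   its start after r/g_j steps.  As the endpoints lie in [0, g_j), where the
   forbidden vertices are, avoiding them means exactly a < r/g_(j1) and
   b < r/g_(j2).  When one of the two levels has g = 1, its loop count is the
   unique solution of a congruence with unit coefficient, so the paths are
   counted by the other loop count, which ranges over r/K values. *)

Lemma modn_add_compl d n : 0 < d -> (n + (d - n %% d)) %% d = 0.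
Proof.
move=> d_gt0; rewrite {1}(divn_eq n d) -addnA (subnKC (ltnW (ltn_pmod n d_gt0))).
by rewrite modnDr modnMl.
Qed.

Definition period (r m : nat) : nat := r %/ gcdn m r.

Lemma period_gt0 r m : 0 < r -> 0 < period r m.
Proof.
by move=> r_gt0; rewrite divn_gt0 ?gcdn_gt0 ?r_gt0 ?orbT // dvdn_leq // dvdn_gcdr.
Qed.

Lemma period_coprime r m : coprime m r -> period r m = r.
Proof. by rewrite /period => /eqP ->; rewrite divn1. Qed.

Lemma dvdn_mul_period r m c : 0 < r -> (r %| c * m) = (period r m %| c).
Proof.
move=> r_gt0; rewrite /period; set g := gcdn m r.
have g_gt0 : 0 < g by rewrite gcdn_gt0 r_gt0 orbT.
have [r' Er] := dvdnP (dvdn_gcdr m r); have [m' Em] := dvdnP (dvdn_gcdl m r).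
rewrite -/g in Er Em.
have co : coprime r' m'.
  by rewrite /coprime -(eqn_pmul2r g_gt0) mul1n muln_gcdl -Er -Em gcdnC.
by rewrite {1}Er Em mulnA dvdn_pmul2r // Gauss_dvdl // Er mulnK.
Qed.

Lemma eq_orbit_mod r m x c c' : 0 < r -> c' <= c ->
  ((x + c * m) %% r == (x + c' * m) %% r) = (period r m %| c - c').
Proof.
move=> r_gt0 le_c'c.
rewrite -(subnKC le_c'c) mulnDl addnA -{2}[x + c' * m]addn0 eqn_modDl mod0n.
by rewrite -dvdn_mul_period // addKn.
Qed.

Lemma orbit_mod_gcd r m x c : (x + c * m) %% r %% gcdn m r = x %% gcdn m r.
Proof.
by rewrite modn_dvdm ?dvdn_gcdr // -modnDmr -modnMmr (eqP (dvdn_gcdl m r))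
  muln0 mod0n addn0.
Qed.

Lemma orbit_lt_gcdE r m x c : 0 < r ->
  ((x + c * m) %% r < gcdn m r) = ((x + c * m) %% r == x %% gcdn m r).
Proof.
move=> r_gt0; apply/idP/eqP => [lt_g|->].
  by rewrite -(orbit_mod_gcd r m x c) (modn_small lt_g).
by rewrite ltn_pmod // gcdn_gt0 r_gt0 orbT.
Qed.

Lemma orbit_prefix_ge_gcd r m x a : 0 < r -> x < gcdn m r ->
  all (fun c => gcdn m r <= (x + c * m) %% r) (iota 1 a) = (a < period r m).
Proof.
move=> r_gt0 x_lt_g.
have x_lt_r : x < r by apply: leq_trans x_lt_g (dvdn_leq r_gt0 (dvdn_gcdr m r)).
have ndvd c : (gcdn m r <= (x + c * m) %% r) = ~~ (period r m %| c).
  have x_eq : x %% gcdn m r = (x + 0 * m) %% r by rewrite mul0n addn0 !modn_small.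
  by rewrite leqNgt orbit_lt_gcdE // x_eq eq_orbit_mod // subn0.
apply/allP/idP => [all_ndvd | lt_a c].
- rewrite ltnNge; apply/negP => le_a.
  have := all_ndvd (period r m); rewrite ndvd dvdnn mem_iota period_gt0 //.
  by rewrite add1n ltnS le_a => /(_ isT).
- rewrite mem_iota ndvd add1n ltnS => /andP [c_gt0 le_ca].
  by apply/negP => /(dvdn_leq c_gt0); lia.
Qed.

Lemma orbit_first_hit r m k b : 0 < r -> (k + b * m) %% r < gcdn m r ->
  all (fun c => gcdn m r <= (k + c * m) %% r) (iota 0 b) = (b < period r m).
Proof.
move=> r_gt0 hit.
have ndvd c : c <= b -> (gcdn m r <= (k + c * m) %% r) = ~~ (period r m %| b - c).
  move=> le_cb; rewrite leqNgt orbit_lt_gcdE //.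
  move: hit; rewrite orbit_lt_gcdE // => /eqP <-.
  by rewrite eq_sym eq_orbit_mod.
have q_gt0 := period_gt0 m r_gt0.
apply/allP/idP => [all_ndvd | lt_b c].
- rewrite ltnNge; apply/negP => le_b.
  have mem : b - period r m \in iota 0 b.
    by rewrite mem_iota add0n ltn_subrL q_gt0 (leq_trans q_gt0 le_b).
  by have := all_ndvd _ mem; rewrite ndvd ?leq_subr // subKn // dvdnn.
- rewrite mem_iota add0n leq0n /= => lt_cb; rewrite ndvd ?(ltnW lt_cb) //.
  apply/negP => /dvdn_leq; rewrite subn_gt0 lt_cb => /(_ isT).
  by rewrite leqNgt (leq_ltn_trans (leq_subr c b) lt_b).
Qed.

Definition mod_solve (r u z w : nat) : nat :=
  find (fun c => (z + c * u) %% r == w %% r) (iota 0 r).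

Lemma mod_solveP r u z w c : 0 < r -> coprime u r ->
  (c < r) && ((z + c * u) %% r == w %% r) = (c == mod_solve r u z w).
Proof.
move=> r_gt0 co; rewrite /mod_solve; set P := fun c => _ == _.
have sol_uniq c1 c2 :
    c1 < r -> c2 < r -> (z + c1 * u) %% r = (z + c2 * u) %% r -> c1 = c2.
  wlog le21 : c1 c2 / c2 <= c1 => [hyp lt1 lt2 E|lt1 lt2 /eqP].
    by case: (leqP c2 c1) => [|/ltnW] le; [apply: hyp | apply/esym/hyp].
  rewrite eq_orbit_mod // period_coprime // /dvdn modn_small; last first.
    exact: leq_ltn_trans (leq_subr c2 c1) lt1.
  by rewrite subn_eq0 => le12; apply/eqP; rewrite eqn_leq le12.
pose s := [seq (z + c * u) %% r | c <- iota 0 r].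
have [_ s_full] : (size s = size (iota 0 r)) * (s =i iota 0 r).
  apply: uniq_min_size; rewrite ?size_map //.
  - rewrite map_inj_in_uniq ?iota_uniq // => c1 c2.
    by rewrite !mem_iota; apply: sol_uniq.
  - by move=> _ /mapP [d _ ->]; rewrite mem_iota ltn_pmod.
have has_sol : has P (iota 0 r).
  have /mapP [d d_in Ed] : w %% r \in s by rewrite s_full mem_iota ltn_pmod.
  by apply/hasP; exists d; rewrite // /P -Ed.
have := has_sol; rewrite has_find size_iota => sol_lt.
have := nth_find 0 has_sol; rewrite nth_iota // add0n /P => /eqP sol.
apply/idP/eqP => [/andP [c_lt /eqP Ec]|->]; last by rewrite sol_lt sol eqxx.
by apply: sol_uniq; rewrite // Ec.
Qed.

Lemma size_undup_eq2 (T : eqType) (s : seq T) u v : u != v -> u \in s -> v \in s ->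
  (size (undup s) == 2) = all [in [:: u; v]] s.
Proof.
move=> neq_uv u_in v_in.
have uv_uniq : uniq [:: u; v] by rewrite /= inE neq_uv.
have uv_sub : {subset [:: u; v] <= undup s}.
  by move=> z; rewrite mem_undup !inE => /orP [] /eqP ->.
apply/eqP/allP => [size2 z z_in | sub_uv].
- have [_ ->] := uniq_min_size uv_uniq uv_sub (eq_leq size2).
  by rewrite mem_undup.
- rewrite -(perm_size (uniq_perm uv_uniq (undup_uniq s) _)) // => z.
  by apply/idP/idP => [/uv_sub | ]; rewrite // mem_undup => /sub_uv.
Qed.

Lemma path_two_blocks (T : eqType) (e : rel T) u v s : u != v -> ~~ e v u ->
  path e u s -> all [in [:: u; v]] s -> last u s = v ->
  exists a b, s = nseq a u ++ nseq b.+1 v.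
Proof.
move=> neq_uv nevu; elim: s => [|z s IH] /=.
  by move=> _ _ Euv; rewrite Euv eqxx in neq_uv.
rewrite !inE => /andP [euz s_path] /andP [/orP [] /eqP Ez s_uv] s_last; subst z.
- by have [a [b ->]] := IH s_path s_uv s_last; exists a.+1, b.
- exists 0, (size s); congr (v :: _); apply/all_pred1P.
  elim: s s_path s_uv {IH s_last} => //= z s IHs /andP [evz s_path] /andP [z_uv s_uv].
  have /eqP Ez : z == v.
    by move: z_uv; rewrite !inE => /orP [/eqP Ez|//]; rewrite -Ez evz in nevu.
  by subst z; rewrite eqxx IHs.
Qed.

Lemma exists_enum_injective (T : eqType) (P : pred T) (F : nat -> T) n :
  injective F -> (forall p, P p <-> exists2 i, i < n & p = F i) ->
  exists s, [/\ uniq s, forall p, (p \in s) = P p & size s = n].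
Proof.
move=> F_inj P_F; exists (map F (iota 0 n)); split.
- by rewrite map_inj_uniq ?iota_uniq.
- move=> p; apply/mapP/idP => [[i] | /P_F [i lt_i ->]].
    by rewrite mem_iota => lt_i ->; apply/P_F; exists i.
  by exists i; rewrite ?mem_iota.
- by rewrite size_map size_iota.
Qed.

Lemma forbidden_level r m (i j p : 'I_4) z : minn i j <= p <= maxn i j ->
  forbidden r m i j (p, z) = (z < gcdn (m p) r).
Proof. by rewrite /forbidden /= => ->. Qed.

Section OneStepPaths.

Variables (r : nat) (m : 'I_4 -> nat).

Fixpoint walk (v : vertex) (p : seq edge) : bool :=
  if p is e :: q then (esrc r m e == v) && walk (ergn e) q else true.

Lemma walk_cat v p q :
  walk v (p ++ q) = walk v p && walk (last v (map ergn p)) q.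
Proof. by elim: p v => //= e p IH v; rewrite IH andbA. Qed.

Lemma chained_walk e p : chained r m e p = walk (ergn e) p.
Proof. by elim: p e => //= f p IH e; rewrite IH. Qed.

Lemma is_path_from p d v :
  is_path r m p && (path_src r m p d == v) =
  [&& p != [::], all (valid_edge r) p & walk v p].
Proof.
case: p => //= e q; rewrite chained_walk.
by case: (esrc r m e == v); rewrite ?andbF ?andbT.
Qed.

Lemma levels_walk v p : walk v p -> p != [::] ->
  levels r m p = undup (v.1 :: [seq e.1.2 | e <- p]).
Proof. by case: p => //= e q /andP [/eqP <- _] _; rewrite /levels /= -map_comp. Qed.

Lemma walk_levels_sorted v p : walk v p -> all (valid_edge r) p ->
  path [rel i j : 'I_4 | i <= j] v.1 [seq e.1.2 | e <- p].
Proof.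
elim: p v => //= e p IH v /andP [/eqP <- walk_p] /andP [/andP [le_e _] valid_p].
by rewrite /= le_e (IH (ergn e)).
Qed.

Lemma ranges_rcons p s v d : map ergn p = rcons s v ->
  interior_vertices p = s /\ path_rng p d = v.
Proof.
case: p => [|e q] /=; first by case: s.
rewrite lastI => /rcons_inj [<- <-]; split; first by rewrite belast_map.
by rewrite last_map.
Qed.

Hypothesis r_gt0 : 0 < r.

Lemma esrc_step (j j' : 'I_4) x :
  esrc r m (j, j', (x + m j) %% r) = (j, x %% r).
Proof.
by rewrite /esrc /= modnDml -addnA -modnDmr (modn_add_compl _ r_gt0) addn0.
Qed.

Lemma edge_of_esrc e v : e.2 < r -> esrc r m e = v ->
  e = (v.1, e.1.2, (v.2 + m v.1) %% r).
Proof.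
case: e => [[i j] k] /= lt_kr <- /=; congr pair.
rewrite modnDml -addnA [_ + m i]addnC -modnDmr (modn_add_compl _ r_gt0).
by rewrite addn0 modn_small.
Qed.

Lemma walk_inj v p p' : walk v p -> walk v p' ->
  all (valid_edge r) p -> all (valid_edge r) p' ->
  [seq e.1.2 | e <- p] = [seq e.1.2 | e <- p'] -> p = p'.
Proof.
elim: p v p' => [|e p IH] v [|e' p'] //= /andP [/eqP src_e walk_p]
  /andP [/eqP src_e' walk_p'] /andP [/andP [_ lt_e] valid_p]
  /andP [/andP [_ lt_e'] valid_p'] [lvl_e lvl_p].
have ee' : e = e'.
  by rewrite (edge_of_esrc lt_e src_e) (edge_of_esrc lt_e' src_e') lvl_e.
by rewrite -ee' in walk_p' *; rewrite (IH _ _ walk_p walk_p').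
Qed.

Fixpoint loops (j : 'I_4) (x n : nat) : seq edge :=
  if n is n'.+1 then (j, j, (x + m j) %% r) :: loops j (x + m j) n' else [::].

Lemma loops_targets j x n : [seq e.1.2 | e <- loops j x n] = nseq n j.
Proof. by elim: n x => //= n IH x; rewrite IH. Qed.

Lemma loops_ranges j x n :
  map ergn (loops j x n) = [seq (j, (x + c * m j) %% r) | c <- iota 1 n].
Proof.
elim: n x => //= n IH x; rewrite IH mul1n -[2]/(1 + 1) iotaDl -map_comp.
by congr (_ :: _); apply: eq_map => c /=; rewrite mulnDl mul1n addnA.
Qed.

Lemma last_loops j x n :
  last (j, x %% r) (map ergn (loops j x n)) = (j, (x + n * m j) %% r).
Proof. by elim: n x => [|n IH] x /=; rewrite ?addn0 // IH mulSn addnA. Qed.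

Lemma walk_loops j x n : walk (j, x %% r) (loops j x n).
Proof. by elim: n x => //= n IH x; rewrite esrc_step eqxx IH. Qed.

Lemma valid_loops j x n : all (valid_edge r) (loops j x n).
Proof. by elim: n x => //= n IH x; rewrite IH /valid_edge /= leqnn ltn_pmod. Qed.

Definition cross_path (j1 j2 : 'I_4) (x a b : nat) : seq edge :=
  let k := x + a.+1 * m j1 in loops j1 x a ++ (j1, j2, k %% r) :: loops j2 k b.

Lemma cross_path_targets j1 j2 x a b :
  [seq e.1.2 | e <- cross_path j1 j2 x a b] = nseq a j1 ++ nseq b.+1 j2.
Proof. by rewrite map_cat /= !loops_targets. Qed.

Lemma cross_path_inj (j1 j2 : 'I_4) x a b a' b' : j1 != j2 ->
  cross_path j1 j2 x a b = cross_path j1 j2 x a' b' -> a = a' /\ b = b'.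
Proof.
move=> neq_j /(congr1 (map (fun e : edge => e.1.2))); rewrite !cross_path_targets.
move=> E; have := congr1 (count_mem j1) E; have := congr1 size E.
rewrite !count_cat !count_nseq !size_cat !size_nseq /= eqxx.
rewrite [j2 == j1]eq_sym (negPf neq_j).
by rewrite mul1n mul0n !addn0; lia.
Qed.

Lemma walk_cross_path j1 j2 x a b : x < r -> walk (j1, x) (cross_path j1 j2 x a b).
Proof.
move=> lt_xr; rewrite -{1}(modn_small lt_xr) walk_cat walk_loops last_loops /=.
by rewrite mulSnr addnA esrc_step eqxx walk_loops.
Qed.

Lemma valid_cross_path (j1 j2 : 'I_4) x a b : j1 <= j2 ->
  all (valid_edge r) (cross_path j1 j2 x a b).
Proof.
by move=> le_j; rewrite all_cat /= !valid_loops /valid_edge /= le_j ltn_pmod.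
Qed.

Lemma cross_path_ranges j1 j2 x a b :
  map ergn (cross_path j1 j2 x a b) =
  rcons ([seq (j1, (x + c * m j1) %% r) | c <- iota 1 a] ++
         [seq (j2, (x + a.+1 * m j1 + c * m j2) %% r) | c <- iota 0 b])
        (j2, (x + a.+1 * m j1 + b * m j2) %% r).
Proof.
rewrite map_cat /= !loops_ranges rcons_cat; congr (_ ++ _).
rewrite -(map_rcons (fun c => (j2, (x + a.+1 * m j1 + c * m j2) %% r))).
by rewrite -cats1 -[[:: b]]/(iota (0 + b) 1) -iotaD addn1 /= mul0n addn0.
Qed.

Lemma admissible_cross_path (j1 j2 : 'I_4) x y a b :
    j1 < j2 -> x < gcdn (m j1) r -> y < gcdn (m j2) r ->
  kstep_admissible r m 1 (j1, x) (j2, y) (cross_path j1 j2 x a b) =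
  [&& a < period r (m j1), b < period r (m j2)
    & (x + a.+1 * m j1 + b * m j2) %% r == y].
Proof.
move=> lt_j lt_x lt_y; set p := cross_path j1 j2 x a b.
have lt_xr : x < r := leq_trans lt_x (dvdn_leq r_gt0 (dvdn_gcdr _ _)).
have p_walk : walk (j1, x) p by apply: walk_cross_path.
have p_ne : p != [::] by rewrite -size_eq0 size_cat addnS.
have p_levels : size (levels r m p) == 2.
  have neq_j : j1 != j2 by rewrite neq_ltn lt_j.
  rewrite (levels_walk p_walk p_ne) cross_path_targets.
  rewrite (@size_undup_eq2 _ _ j1 j2) /= ?mem_head //.
  - by rewrite all_cat /= !all_nseq !inE !eqxx !orbT.
  - by rewrite inE mem_cat mem_head !orbT.
rewrite /kstep_admissible /admissible p_levels andbT andbA is_path_from p_ne.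
rewrite (valid_cross_path x a b (ltnW lt_j)) p_walk.
have [-> ->] := ranges_rcons (j2, y) (cross_path_ranges j1 j2 x a b).
have forb1 z : ~~ forbidden r m j1 j2 (j1, z) = (gcdn (m j1) r <= z).
  by rewrite forbidden_level ?geq_minl ?leq_maxl // -leqNgt.
have forb2 z : ~~ forbidden r m j1 j2 (j2, z) = (gcdn (m j2) r <= z).
  by rewrite forbidden_level ?geq_minr ?leq_maxr // -leqNgt.
rewrite xpair_eqE eqxx /= all_cat !all_map.
rewrite (eq_all (fun c => forb1 ((x + c * m j1) %% r))).
rewrite (eq_all (fun c => forb2 ((x + a.+1 * m j1 + c * m j2) %% r))).
rewrite orbit_prefix_ge_gcd //.
case: eqP => [hit|]; last by rewrite !andbF.
by rewrite orbit_first_hit ?hit // andbT.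
Qed.

Lemma one_step_shape (j1 j2 : 'I_4) x y p : j1 < j2 -> x < r ->
  kstep_admissible r m 1 (j1, x) (j2, y) p -> exists a b, p = cross_path j1 j2 x a b.
Proof.
move=> lt_j lt_xr /andP [/and4P [p_path p_src p_rng _] p_levels].
have /and3P [p_ne p_valid p_walk] :
    [&& p != [::], all (valid_edge r) p & walk (j1, x) p].
  by rewrite -(is_path_from _ (j1, x)) p_path p_src.
have last_j2 : last j1 [seq e.1.2 | e <- p] = j2.
  case: p p_ne p_rng {p_path p_src p_valid p_walk p_levels} => //= e q _.
  by rewrite (last_map (fun e : edge => e.1.2)) => /eqP/(congr1 fst).
have neq_j : j1 != j2 by rewrite neq_ltn lt_j.
have p_targets : all [in [:: j1; j2]] [seq e.1.2 | e <- p].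
  move: p_levels; rewrite (levels_walk p_walk p_ne) (@size_undup_eq2 _ _ j1 j2) //=.
  - by case/andP.
  - by rewrite mem_head.
  - by rewrite -last_j2 mem_last.
have [|a [b p_blocks]] := path_two_blocks neq_j _ (walk_levels_sorted p_walk p_valid)
  p_targets last_j2; first by rewrite /= -ltnNge.
exists a, b; apply: (walk_inj p_walk (walk_cross_path j1 j2 a b lt_xr) p_valid).
  exact: (valid_cross_path x a b (ltnW lt_j)).
by rewrite cross_path_targets.
Qed.

Lemma one_step_admissibleP (j1 j2 : 'I_4) x y p :
    j1 < j2 -> x < gcdn (m j1) r -> y < gcdn (m j2) r ->
  kstep_admissible r m 1 (j1, x) (j2, y) p <->
  exists a b, [/\ p = cross_path j1 j2 x a b, a < period r (m j1),
    b < period r (m j2) & (x + a.+1 * m j1 + b * m j2) %% r = y].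
Proof.
move=> lt_j lt_x lt_y.
have lt_xr : x < r := leq_trans lt_x (dvdn_leq r_gt0 (dvdn_gcdr _ _)).
split => [adm | [a [b [-> lt_a lt_b hit]]]].
- have [a [b p_cross]] := one_step_shape lt_j lt_xr adm.
  move: adm; rewrite p_cross admissible_cross_path // => /and3P [lt_a lt_b /eqP hit].
  by exists a, b.
- by rewrite admissible_cross_path // lt_a lt_b hit eqxx.
Qed.

Lemma count_one_step_from_coprime (j1 j2 : 'I_4) y :
    j1 < j2 -> coprime (m j1) r -> y < gcdn (m j2) r ->
  exists s, [/\ uniq s,
    forall p, (p \in s) = kstep_admissible r m 1 (j1, 0) (j2, y) p
    & size s = period r (m j2)].
Proof.
move=> lt_j co lt_y; have neq_j : j1 != j2 by rewrite neq_ltn lt_j.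
have lt_yr : y < r := leq_trans lt_y (dvdn_leq r_gt0 (dvdn_gcdr _ _)).
pose a_of b := mod_solve r (m j1) (m j1 + b * m j2) y.
have a_ofP a b :
    (a < r) && ((0 + a.+1 * m j1 + b * m j2) %% r == y) = (a == a_of b).
  rewrite -mod_solveP // (modn_small lt_yr); congr (_ && (_ %% r == y)).
  by rewrite mulSn add0n addnAC.
apply: (@exists_enum_injective _ _ (fun b => cross_path j1 j2 0 (a_of b) b)).
  by move=> b b' /(cross_path_inj neq_j) [].
move=> p; rewrite one_step_admissibleP ?(eqP co) // (period_coprime co).
split => [[a [b [-> lt_a lt_b /eqP hit]]] | [b lt_b ->]].
  by exists b => //; congr cross_path; apply/eqP; rewrite -a_ofP lt_a hit.
have /andP [lt_a /eqP hit] := etrans (a_ofP (a_of b) b) (eqxx _).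
by exists (a_of b), b.
Qed.

Lemma count_one_step_to_coprime (j1 j2 : 'I_4) x :
    j1 < j2 -> coprime (m j2) r -> x < gcdn (m j1) r ->
  exists s, [/\ uniq s,
    forall p, (p \in s) = kstep_admissible r m 1 (j1, x) (j2, 0) p
    & size s = period r (m j1)].
Proof.
move=> lt_j co lt_x; have neq_j : j1 != j2 by rewrite neq_ltn lt_j.
pose b_of a := mod_solve r (m j2) (x + a.+1 * m j1) 0.
have b_ofP a b :
    (b < r) && ((x + a.+1 * m j1 + b * m j2) %% r == 0) = (b == b_of a).
  by rewrite -mod_solveP // mod0n.
apply: (@exists_enum_injective _ _ (fun a => cross_path j1 j2 x a (b_of a))).
  by move=> a a' /(cross_path_inj neq_j) [].
move=> p; rewrite one_step_admissibleP ?(eqP co) // (period_coprime co).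
split => [[a [b [-> lt_a lt_b /eqP hit]]] | [a lt_a ->]].
  by exists a => //; congr cross_path; apply/eqP; rewrite -b_ofP lt_b hit.
have /andP [lt_b /eqP hit] := etrans (b_ofP a (b_of a)) (eqxx _).
by exists a, (b_of a).
Qed.

End OneStepPaths.

Theorem lemma6p2 (r : nat) (m : 'I_4 -> nat) (l : 'I_4) (K : nat) (t : nat) :
  2 <= r ->
  gcdn (m l) r = K ->
  (forall i : 'I_4, i != l -> gcdn (m i) r = 1) ->
  t < K ->
  (forall i : 'I_4, i < l ->
     exists s : seq (seq edge),
       [/\ uniq s,
           (forall p, (p \in s) = kstep_admissible r m 1 (i, 0) (l, t) p) &
           size s = r %/ K])
  /\
  (forall i : 'I_4, l < i ->
     exists s : seq (seq edge),
       [/\ uniq s,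
           (forall p, (p \in s) = kstep_admissible r m 1 (l, t) (i, 0) p) &
           size s = r %/ K]).
Proof.
move=> r_ge2 gcd_l gcd_other lt_tK; have r_gt0 : 0 < r := ltnW r_ge2.
have period_l : period r (m l) = r %/ K by rewrite /period gcd_l.
have co i : i != l -> coprime (m i) r by move/gcd_other; rewrite /coprime => ->.
rewrite -period_l; split => i lt_i.
- apply: count_one_step_from_coprime; rewrite ?gcd_l //.
  by apply: co; rewrite neq_ltn lt_i.
- apply: count_one_step_to_coprime; rewrite ?gcd_l //.
  by apply: co; rewrite neq_ltn lt_i orbT.
Qed.
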